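(* For every $\omega$-type $\tau$, the set $\mathbb P_\tau$ is a Borel subset of $\mathcal P(\omega^2)$ and is dense in $\mathbb P$: for every $A\in\mathbb P$ there is $B\subseteq A$ with $B\in\mathbb P_\tau$. Consequently $\mathbb P$ is partitioned into continuum many dense Borel pieces $\mathbb P_\tau$.
   Context: $\mathcal P(\omega^2)$ is identified with $2^{\omega^2}$ with the product topology. $\mathbb P$ is the set of all $A\subseteq\omega^2$ such that: (1) $A$ has infinitely many infinite sections and no nonempty finite sections, where $A(x)=\{y:\langle x,y\rangle\in A\}$; (2) sections pairwise disjoint; (3) every $\langle x,y\rangle\in A$ has $x<y$; (4) for $\langle x,y\rangle,\langle x',y'\rangle\in A$, $x\neq y'$. An $\omega$-type is a linear pre-order of formal symbols $x_1,x_2,\dots,y_1,y_2,\dots$ such that $y_1<y_2<\dots$, each $x_i$ precedes $y_i$, each equivalence class is either a single $y_i$ or infinitely many $x_i$'s, there are infinitely many equivalence classes of $x$'s, and the induced order of equivalence classes has order type $\omega$. An element $A\in\mathbb P$, listed as $\{\langle a_i,b_i\rangle:i\ge1\}$ with $b_1<b_2<\cdots$, realizes the $\omega$-type consisting of exactly those inequalities among the symbols that hold when $x_i$ is interpreted as $a_i$ and $y_j$ as $b_j$ (each $A\in\mathbb P$ realizes a unique $\omega$-type). $\mathbb P_\tau$ is the set of elements of $\mathbb P$ realizing $\tau$. *)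

From Stdlib Require Import Arith List.
Import ListNotations.

(* P(omega^2) identified with 2^(omega^2): a subset A of omega^2 is a
   function A : nat -> nat -> bool; <x,y> \in A iff A x y = true. *)
Definition set2 := nat -> nat -> bool.

(* Borel subsets of 2^(omega^2) with the product topology: the sigma-algebra
   generated by the subbasic clopen sets {A | <x,y> \in A}. *)
Inductive Borel : (set2 -> Prop) -> Prop :=
| Borel_basic (x y : nat) : Borel (fun A => A x y = true)
| Borel_compl (S : set2 -> Prop) : Borel S -> Borel (fun A => ~ S A)
| Borel_union (F : nat -> set2 -> Prop) :
    (forall n, Borel (F n)) -> Borel (fun A => exists n, F n A)
| Borel_ext (S T : set2 -> Prop) :
    Borel S -> (forall A, S A <-> T A) -> Borel T.

Definition infinite_nat (P : nat -> Prop) : Prop :=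
  forall n, exists m, n <= m /\ P m.

Definition section (A : set2) (x : nat) : nat -> Prop := fun y => A x y = true.

Definition inP (A : set2) : Prop :=
  infinite_nat (fun x => infinite_nat (section A x)) /\
  (forall x, (exists y, section A x y) -> infinite_nat (section A x)) /\
  (forall x x' y, A x y = true -> A x' y = true -> x = x') /\
  (forall x y, A x y = true -> x < y) /\
  (forall x y x' y', A x y = true -> A x' y' = true -> x <> y').

(* formal symbols; SX i stands for x_{i+1}, SY i for y_{i+1} (0-indexed) *)
Inductive Sym : Type := SX (i : nat) | SY (i : nat).

Section Preorder.
Variable le : Sym -> Sym -> Prop.
Definition slt (s t : Sym) : Prop := le s t /\ ~ le t s.
Definition seqv (s t : Sym) : Prop := le s t /\ le t s.

Definition omega_type : Prop :=
  (forall s, le s s) /\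
  (forall s t u, le s t -> le t u -> le s u) /\
  (forall s t, le s t \/ le t s) /\
  (forall i j, i < j -> slt (SY i) (SY j)) /\
  (forall i, slt (SX i) (SY i)) /\
  (forall s,
     (exists i, s = SY i /\ forall t, seqv s t -> t = SY i) \/
     ((forall t, seqv s t -> exists j, t = SX j) /\
      infinite_nat (fun j => seqv s (SX j)))) /\
  (* infinitely many classes of x's *)
  (forall l : list Sym, exists i, forall t, In t l -> ~ seqv (SX i) t) /\
  (* classes ordered in type omega: each class has finitely many predecessors
     (together with infinitely many classes this is order type omega) *)
  (forall s, exists l : list Sym,
     forall t, slt t s -> exists u, In u l /\ seqv t u).
End Preorder.

Definition interp (a b : nat -> nat) (s : Sym) : nat :=
  match s with SX i => a i | SY j => b j end.

Definition realizes (A : set2) (le : Sym -> Sym -> Prop) : Prop :=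
  exists a b : nat -> nat,
    (forall i j, i < j -> b i < b j) /\
    (forall x y, A x y = true <-> exists i, a i = x /\ b i = y) /\
    (forall s t, le s t <-> interp a b s <= interp a b t).

Definition P_tau (le : Sym -> Sym -> Prop) (A : set2) : Prop :=
  inP A /\ realizes A le.

Definition subset2 (B A : set2) : Prop :=
  forall x y, B x y = true -> A x y = true.

From Pilot Require Import Defs.
From Stdlib Require Import Bool Arith List Lia FinFun.
From Stdlib Require Import Classical ClassicalEpsilon FunctionalExtensionality.
From Stdlib Require Cantor.
Import ListNotations.

(* A member of P is the same as a pair of sequences (a, b), b increasing, listing its points
   <a_i, b_i>; its omega-type only records how the a_i and b_j compare.  Ranking the classes
   of an omega-type tau by omega turns tau itself into such a pair of natural-number
   sequences.  Density: inside A in P, give the classes of tau increasing values, an x-class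
   a point with infinite section and y_j a point in the section of the value of x_j; an
   increasing reparametrisation does not change the type.  Borelness: b_j is the second
   coordinate having exactly j second coordinates below it, which depends on finitely many
   coordinates of A, so realizing tau is a countable Boolean combination of clopen sets.
   Continuum many types: one bit per y_k, telling whether y_k precedes the (k+1)-st x-class. *)

Definition increasing (f : nat -> nat) : Prop := forall i j, i < j -> f i < f j.

Lemma increasing_ge f : increasing f -> forall i, i <= f i.
Proof. intros Hf i; induction i as [|i IH]; [lia|]. specialize (Hf i (S i)); lia. Qed.

Lemma increasing_le_iff f : increasing f -> forall i j, f i <= f j <-> i <= j.
Proof.
  intros Hf i j; split; intros H.
  - destruct (le_lt_dec i j) as [|Hji]; [assumption|]. specialize (Hf j i Hji); lia.
  - destruct (Nat.eq_dec i j) as [->|Hij]; [lia|]. apply Nat.lt_le_incl, Hf; lia.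
Qed.

Lemma increasing_lt_iff f : increasing f -> forall i j, f i < f j <-> i < j.
Proof.
  intros Hf i j. pose proof (increasing_le_iff f Hf j i). rewrite !Nat.lt_nge. tauto.
Qed.

Lemma increasing_inj f : increasing f -> forall i j, f i = f j -> i = j.
Proof.
  intros Hf i j E. apply Nat.le_antisymm; apply (increasing_le_iff f Hf); lia.
Qed.

Lemma increasing_succ f : (forall k, f k < f (S k)) -> increasing f.
Proof.
  intros Hf i j Hij. induction Hij as [|j _ IH]; [apply Hf|]. specialize (Hf j); lia.
Qed.

Lemma increasing_compose f g : increasing f -> increasing g -> increasing (fun i => g (f i)).
Proof. intros Hf Hg i j Hij. apply Hg, Hf, Hij. Qed.

Lemma least_exists (P : nat -> Prop) : (exists n, P n) -> exists n, P n /\ forall m, P m -> n <= m.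
Proof.
  intros HP. destruct (dec_inh_nat_subset_has_unique_least_element P (fun n => classic (P n)) HP)
    as [n [[Hn Hmin] _]]. eauto.
Qed.

Lemma infinite_enum (Y : nat -> Prop) :
  infinite_nat Y -> exists f, increasing f /\ forall y, Y y <-> exists i, f i = y.
Proof.
  intros HY.
  destruct (choice (fun n y => (Y y /\ n <= y) /\ forall z, Y z /\ n <= z -> y <= z))
    as [next Hnext].
  { intros n. apply least_exists. destruct (HY n) as [y [Hy HYy]]. eauto. }
  set (f := fun i => Nat.iter i (fun y => next (S y)) (next 0)).
  assert (Hf : increasing f).
  { apply increasing_succ. intros k. destruct (Hnext (S (f k))) as [[_ H] _]. exact H. }
  exists f. split; [exact Hf|]. intros y. split.
  - intros Hy. destruct (least_exists (fun i => y <= f i)) as [[|k] [Hk Hmin]].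
    + exists y. apply increasing_ge, Hf.
    + exists 0. change (next 0 = y). change (y <= next 0) in Hk.
      destruct (Hnext 0) as [_ Hle]. specialize (Hle y (conj Hy (Nat.le_0_l y))). lia.
    + exists (S k). change (next (S (f k)) = y). change (y <= next (S (f k))) in Hk.
      assert (f k < y) by (specialize (Hmin k); lia).
      destruct (Hnext (S (f k))) as [_ Hle]. specialize (Hle y (conj Hy H)). lia.
  - intros [[|k] <-]; [apply (Hnext 0)|apply (Hnext (S (f k)))].
Qed.

Lemma increasing_agree_le f f' i :
  increasing f -> increasing f' -> (forall y, (exists k, f k = y) -> exists k, f' k = y) ->
  (forall j, j < i -> f j = f' j) -> f' i <= f i.
Proof.
  intros Hf Hf' Hrange Hbelow. destruct (Hrange (f i)) as [k Hk]; [eauto|].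
  destruct (le_lt_dec i k) as [Hik|Hki].
  - rewrite <- Hk. apply increasing_le_iff; assumption.
  - rewrite <- (Hbelow k Hki) in Hk. apply (increasing_inj f Hf) in Hk. lia.
Qed.

Lemma increasing_same_range f f' :
  increasing f -> increasing f' -> (forall y, (exists k, f k = y) <-> exists k, f' k = y) ->
  forall i, f i = f' i.
Proof.
  intros Hf Hf' Hrange i. induction i as [i IH] using lt_wf_ind.
  apply Nat.le_antisymm.
  - apply (increasing_agree_le f' f); auto; [apply Hrange|intros j Hj; symmetry; auto].
  - apply (increasing_agree_le f f'); auto. apply Hrange.
Qed.

Definition listing (A : set2) (a b : nat -> nat) : Prop :=
  increasing b /\ forall x y, A x y = true <-> exists i, a i = x /\ b i = y.

Record admissible (a b : nat -> nat) : Prop := {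
  adm_increasing : increasing b;
  adm_lt : forall i, a i < b i;
  adm_neq : forall i j, a i <> b j;
  adm_repeat : forall i n, exists j, n <= j /\ a j = a i;
  adm_unbounded : forall n, exists i, n <= a i }.

Definition ord (a b : nat -> nat) (s t : Sym) : Prop := interp a b s <= interp a b t.

Definition graph (a b : nat -> nat) : set2 := fun x y =>
  existsb (fun i => (a i =? x) && (b i =? y)) (seq 0 (S y)).

Lemma graph_listing a b : increasing b -> listing (graph a b) a b.
Proof.
  intros Hb. split; [exact Hb|]. intros x y. unfold graph. rewrite existsb_exists. split.
  - intros [i [_ Hi]]. apply andb_true_iff in Hi as [Hx Hy].
    apply Nat.eqb_eq in Hx, Hy. eauto.
  - intros [i [<- <-]]. exists i. split.
    + apply in_seq. pose proof (increasing_ge b Hb i). lia.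
    + rewrite !Nat.eqb_refl. reflexivity.
Qed.

Section Listing.
Variables (A : set2) (a b : nat -> nat).
Hypothesis Hlist : listing A a b.

Lemma listing_mem i : A (a i) (b i) = true.
Proof. apply Hlist. eauto. Qed.

Lemma listing_inP : admissible a b -> inP A.
Proof.
  intros Hadm. destruct Hlist as [Hb Hmem].
  assert (Hinf : forall i, infinite_nat (section A (a i))).
  { intros i n. destruct (adm_repeat _ _ Hadm i n) as [j [Hj Ej]]. exists (b j). split.
    - pose proof (increasing_ge b Hb j). lia.
    - unfold section. rewrite <- Ej. apply listing_mem. }
  split; [|split; [|split; [|split]]].
  - intros n. destruct (adm_unbounded _ _ Hadm n) as [i Hi]. eauto.
  - intros x [y Hy]. apply Hmem in Hy as [i [<- _]]. apply Hinf.
  - intros x x' y Hx Hx'. apply Hmem in Hx as [i [<- Hi]], Hx' as [i' [<- Hi']].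
    subst y. rewrite (increasing_inj b Hb i i'); auto.
  - intros x y Hxy. apply Hmem in Hxy as [i [<- <-]]. apply (adm_lt _ _ Hadm).
  - intros x y x' y' Hxy Hxy'. apply Hmem in Hxy as [i [<- _]], Hxy' as [i' [_ <-]].
    apply (adm_neq _ _ Hadm).
Qed.

Hypothesis HA : inP A.

Lemma listing_admissible : admissible a b.
Proof.
  destruct Hlist as [Hb Hmem]. destruct HA as [Hinf [Hsec [_ [Hlt Hneq]]]].
  constructor.
  - exact Hb.
  - intros i. apply Hlt, listing_mem.
  - intros i j. apply (Hneq _ (b i) (a j) _); apply listing_mem.
  - intros i n. destruct (Hsec (a i) (ex_intro _ (b i) (listing_mem i)) (b n)) as [y [Hy Ay]].
    apply Hmem in Ay as [j [Ej <-]]. exists j.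
    split; [apply (increasing_le_iff b Hb); exact Hy|exact Ej].
  - intros n. destruct (Hinf n) as [x [Hx Hsecx]]. destruct (Hsecx 0) as [y [_ Hxy]].
    apply Hmem in Hxy as [i [<- _]]. eauto.
Qed.

Lemma listing_unique a' b' : listing A a' b' -> forall i, a i = a' i /\ b i = b' i.
Proof.
  intros Hlist'. destruct Hlist as [Hb Hmem], Hlist' as [Hb' Hmem'].
  assert (Hrange : forall y, (exists k, b k = y) <-> exists k, b' k = y).
  { intros y. split; intros [k <-].
    - destruct (proj1 (Hmem' _ _) (listing_mem k)) as [k' [_ E]]. eauto.
    - assert (Hk : A (a' k) (b' k) = true) by (apply Hmem'; eauto).
      destruct (proj1 (Hmem _ _) Hk) as [k' [_ E]]. eauto. }
  intros i. assert (Eb : b i = b' i) by (apply increasing_same_range; assumption).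
  split; [|exact Eb]. destruct HA as [_ [_ [Hdisj _]]]. apply (Hdisj _ _ (b i)).
  - apply listing_mem.
  - rewrite Eb. apply Hmem'. eauto.
Qed.
End Listing.

Lemma inP_listing A : inP A -> exists a b, listing A a b.
Proof.
  intros HA. destruct HA as [Hinf [_ [Hdisj _]]].
  destruct (infinite_enum (fun y => exists x, A x y = true)) as [b [Hb Hrange]].
  { intros n. destruct (Hinf 0) as [x [_ Hx]]. destruct (Hx n) as [y [Hy Hxy]]. eauto. }
  destruct (choice (fun i x => A x (b i) = true)) as [a Ha].
  { intros i. apply Hrange. eauto. }
  exists a, b. split; [exact Hb|]. intros x y. split.
  - intros Hxy. destruct (proj1 (Hrange y) (ex_intro _ x Hxy)) as [i <-].
    exists i. split; [|reflexivity]. apply (Hdisj _ _ (b i)); auto.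
  - intros [i [<- <-]]. apply Ha.
Qed.

Lemma list_max_bound {T} (f : T -> nat) (l : list T) : exists M, forall t, In t l -> f t <= M.
Proof.
  induction l as [|u l [M HM]]; [exists 0; intros t []|].
  exists (max (f u) M). intros t [<-|Ht]; [lia|]. specialize (HM t Ht). lia.
Qed.

Lemma values_below_listed {T} (f : T -> nat) v :
  exists l, forall t, f t < v -> exists u, In u l /\ f u = f t.
Proof.
  induction v as [|v [l Hl]]; [exists []; intros t Ht; lia|].
  destruct (classic (exists t, f t = v)) as [[t0 Ht0]|Hno].
  - exists (t0 :: l). intros t Ht. destruct (Nat.eq_dec (f t) v) as [E|E].
    + exists t0. split; [left; reflexivity|congruence].
    + destruct (Hl t) as [u [Hu Eu]]; [lia|]. exists u. split; [right|]; assumption.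
  - exists l. intros t Ht. apply Hl. destruct (Nat.eq_dec (f t) v) as [E|E]; [|lia].
    exfalso. eauto.
Qed.

Lemma admissible_omega_type a b : admissible a b -> omega_type (ord a b).
Proof.
  intros Hadm. unfold omega_type, slt, seqv, ord.
  pose proof (adm_increasing _ _ Hadm) as Hb.
  pose proof (adm_lt _ _ Hadm) as Hlt. pose proof (adm_neq _ _ Hadm) as Hneq.
  split; [intros; lia|]. split; [intros; lia|]. split; [intros; lia|].
  split; [intros i j Hij; specialize (Hb i j Hij); cbn; lia|].
  split; [intros i; specialize (Hlt i); cbn; lia|].
  split; [|split].
  - intros [i|i].
    + right. split.
      * intros [j|j] [H1 H2]; cbn in *; [eauto|]. exfalso. apply (Hneq i j). lia.
      * intros n. destruct (adm_repeat _ _ Hadm i n) as [j [Hj Ej]].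
        exists j. cbn. split; [exact Hj|lia].
    + left. exists i. split; [reflexivity|]. intros [j|j] [H1 H2]; cbn in *.
      * exfalso. apply (Hneq j i). lia.
      * f_equal. apply (increasing_inj b Hb). lia.
  - intros l. destruct (list_max_bound (interp a b) l) as [M HM].
    destruct (adm_unbounded _ _ Hadm (S M)) as [i Hi]. exists i. intros t Ht [H1 H2].
    specialize (HM t Ht). cbn in *. lia.
  - intros s. destruct (values_below_listed (interp a b) (interp a b s)) as [l Hl].
    exists l. intros t [H1 H2]. destruct (Hl t) as [u [Hu Eu]]; [lia|].
    exists u. split; [exact Hu|lia].
Qed.

Section Reparametrize.
Variables (a b g : nat -> nat).
Hypothesis Hg : increasing g.

Lemma ord_compose s t : ord (fun i => g (a i)) (fun i => g (b i)) s t <-> ord a b s t.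
Proof.
  unfold ord. destruct s, t; cbn; apply increasing_le_iff, Hg.
Qed.

Lemma admissible_compose : admissible a b -> admissible (fun i => g (a i)) (fun i => g (b i)).
Proof.
  intros Hadm. constructor.
  - apply increasing_compose; [apply (adm_increasing _ _ Hadm)|exact Hg].
  - intros i. apply Hg, (adm_lt _ _ Hadm).
  - intros i j E. apply (adm_neq _ _ Hadm i j), (increasing_inj g Hg), E.
  - intros i n. destruct (adm_repeat _ _ Hadm i n) as [j [Hj Ej]]. exists j. rewrite Ej. auto.
  - intros n. destruct (adm_unbounded _ _ Hadm n) as [i Hi]. exists i.
    pose proof (increasing_ge g Hg (a i)). lia.
Qed.
End Reparametrize.

Lemma graph_P_tau a b (tau : Sym -> Sym -> Prop) :
  admissible a b -> (forall s t, tau s t <-> ord a b s t) -> P_tau tau (graph a b).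
Proof.
  intros Hadm Htau. pose proof (graph_listing a b (adm_increasing _ _ Hadm)) as Hlist.
  split; [exact (listing_inP _ _ _ Hlist Hadm)|].
  exists a, b. destruct Hlist as [Hb Hmem]. auto.
Qed.

(** * Ranking the classes of an omega-type *)

Lemma pigeonhole (f : nat -> nat) n : (forall k, f k < n) -> exists j k, j <> k /\ f j = f k.
Proof.
  intros Hf. apply NNPP. intros Hinj.
  assert (Hnd : NoDup (map f (seq 0 (S n)))).
  { apply Injective_map_NoDup_in; [|apply seq_NoDup].
    intros j k _ _ E. apply NNPP. intros D. apply Hinj. eauto. }
  apply (NoDup_incl_length (l' := seq 0 n)) in Hnd.
  - rewrite length_map, !length_seq in Hnd. lia.
  - intros x Hx. apply in_map_iff in Hx as [k [<- _]]. apply in_seq. specialize (Hf k). lia.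
Qed.

(* [slt] and [seqv] of [Defs], for a preorder on an arbitrary type *)
Definition strict {T} (le : T -> T -> Prop) (s t : T) : Prop := le s t /\ ~ le t s.
Definition same {T} (le : T -> T -> Prop) (s t : T) : Prop := le s t /\ le t s.

Section Rank.
Variables (T : Type) (le : T -> T -> Prop).
Hypothesis le_refl : forall s, le s s.
Hypothesis le_trans : forall s t u, le s t -> le t u -> le s u.
Hypothesis le_total : forall s t, le s t \/ le t s.
Hypothesis finite_below :
  forall s, exists l, forall t, strict le t s -> exists u, In u l /\ same le t u.

Lemma not_le_strict s t : ~ le s t -> strict le t s.
Proof. intros H. split; [destruct (le_total s t); tauto|exact H]. Qed.

Lemma strict_le_trans s t u : strict le s t -> le t u -> strict le s u.
Proof. intros [H1 H2] H3. split; eauto. Qed.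

Lemma list_min (Q : T -> Prop) (l : list T) :
  (exists u, In u l /\ Q u) -> exists u, In u l /\ Q u /\ forall v, In v l -> Q v -> le u v.
Proof.
  induction l as [|w l IH]; intros [u [Hu Qu]]; [destruct Hu|].
  destruct (classic (exists u, In u l /\ Q u)) as [Hl|Hl].
  - destruct (IH Hl) as [m [Hm [Qm Hmin]]].
    destruct (classic (Q w /\ le w m)) as [[Qw Hwm]|Hw].
    + exists w. split; [left; reflexivity|]. split; [exact Qw|].
      intros v [<-|Hv] Qv; [apply le_refl|eauto].
    + exists m. split; [right; exact Hm|]. split; [exact Qm|].
      intros v [<-|Hv] Qv; [|eauto]. destruct (le_total m w); [assumption|tauto].
  - destruct Hu as [<-|Hu]; [|exfalso; eauto].
    exists w. split; [left; reflexivity|]. split; [exact Qu|].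
    intros v [<-|Hv] Qv; [apply le_refl|exfalso; eauto].
Qed.

Lemma min_exists (P : T -> Prop) : (exists s, P s) -> exists m, P m /\ forall t, P t -> le m t.
Proof.
  intros [s0 Ps0]. destruct (finite_below s0) as [l Hl].
  (* a least class, among those listed by s0 :: l, containing a point of P below s0 *)
  destruct (list_min (fun u => exists t, P t /\ le t s0 /\ same le t u) (s0 :: l))
    as [u [_ [[m [Pm [Hms0 [Hmu _]]]] Hmin]]].
  { exists s0. split; [left; reflexivity|]. exists s0. repeat split; auto. }
  exists m. split; [exact Pm|]. intros t Pt. apply NNPP. intros Hmt.
  assert (Hts0 : strict le t s0)
    by (apply (strict_le_trans _ m); [apply not_le_strict|]; assumption).
  destruct (Hl t Hts0) as [u' [Hu' [Htu' Hu't]]].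
  apply Hmt, (le_trans _ u); [exact Hmu|]. apply (le_trans _ u'); [|exact Hu't].
  apply Hmin; [right; exact Hu'|]. exists t. destruct Hts0. repeat split; auto.
Qed.

Section Enumeration.
Variable rep : nat -> T.
Hypothesis rep_zero : forall t, le (rep 0) t.
Hypothesis rep_succ :
  forall k, strict le (rep k) (rep (S k)) /\ forall t, strict le (rep k) t -> le (rep (S k)) t.

Lemma rep_strict j k : j < k -> strict le (rep j) (rep k).
Proof.
  intros Hjk. induction Hjk as [|k _ IH]; [apply rep_succ|].
  destruct IH as [H1 H2], (rep_succ k) as [[H3 H4] _]. split; eauto.
Qed.

Lemma rep_le_iff j k : le (rep j) (rep k) <-> j <= k.
Proof.
  split; intros H.
  - destruct (le_lt_dec j k) as [|Hkj]; [assumption|]. exfalso. apply (rep_strict k j Hkj), H.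
  - destruct (Nat.eq_dec j k) as [->|Hjk]; [apply le_refl|]. apply rep_strict. lia.
Qed.

Lemma rep_cofinal s : exists k, le s (rep k).
Proof.
  apply NNPP. intros Hno. destruct (finite_below s) as [l Hl].
  destruct (choice (fun k n => n < length l /\ same le (rep k) (nth n l s))) as [idx Hidx].
  { intros k. destruct (Hl (rep k)) as [u [Hu Eu]].
    - apply not_le_strict. eauto.
    - apply (In_nth _ _ s) in Hu as [n [Hn <-]]. eauto. }
  destruct (pigeonhole idx (length l)) as [j [k [Hjk E]]]; [apply Hidx|].
  destruct (Hidx j) as [_ [Hj1 Hj2]], (Hidx k) as [_ [Hk1 Hk2]]. rewrite E in Hj1, Hj2.
  apply Hjk, Nat.le_antisymm; apply rep_le_iff; eauto.
Qed.

Lemma rep_exhaustive s : exists k, same le s (rep k).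
Proof.
  destruct (rep_cofinal s) as [k Hk]. revert s Hk. induction k as [|k IH]; intros s Hk.
  - exists 0. split; [exact Hk|apply rep_zero].
  - destruct (classic (le s (rep k))) as [Hs|Hs]; [apply IH, Hs|].
    exists (S k). split; [exact Hk|]. apply rep_succ, not_le_strict, Hs.
Qed.
End Enumeration.

Lemma omega_rank (s0 : T) : (forall s, exists t, strict le s t) ->
  exists (rep : nat -> T) (r : T -> nat),
    (forall s t, le s t <-> r s <= r t) /\ (forall k, r (rep k) = k).
Proof.
  intros Hnomax.
  destruct (min_exists (fun _ => True)) as [m0 [_ Hm0]]; [eauto|].
  destruct (choice (fun s m => strict le s m /\ forall t, strict le s t -> le m t)) as [next Hnext].
  { intros s. destruct (min_exists (strict le s) (Hnomax s)) as [m Hm]. eauto. }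
  set (rep := fun k => Nat.iter k next m0).
  assert (Hzero : forall t, le (rep 0) t) by (intros t; apply Hm0; trivial).
  assert (Hsucc : forall k, strict le (rep k) (rep (S k)) /\
                            forall t, strict le (rep k) t -> le (rep (S k)) t)
    by (intros k; apply Hnext).
  destruct (choice (fun s k => same le s (rep k))) as [r Hr].
  { apply rep_exhaustive; assumption. }
  assert (Hle : forall s t, le s t <-> r s <= r t).
  { intros s t. rewrite <- (rep_le_iff rep Hsucc). destruct (Hr s), (Hr t). split; eauto. }
  exists rep, r. split; [exact Hle|]. intros k.
  destruct (Hr (rep k)) as [H1 H2]. apply Nat.le_antisymm; apply (rep_le_iff rep Hsucc); assumption.
Qed.
End Rank.

Lemma omega_type_admissible le :
  omega_type le -> exists a b, admissible a b /\ forall s t, le s t <-> ord a b s t.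
Proof.
  intros [Hrefl [Htrans [Htot [HY [HXY [Hcls [Hinf Hfin]]]]]]].
  assert (Hnomax : forall s, exists t, strict le s t).
  { intros s. destruct (Hfin s) as [l Hl]. destruct (Hinf (s :: l)) as [i Hi].
    exists (SX i). apply (not_le_strict _ le Htot). intros C.
    destruct (classic (le s (SX i))) as [D|D].
    - apply (Hi s); [left; reflexivity|split; assumption].
    - destruct (Hl (SX i)) as [u [Hu Eu]]; [split; assumption|].
      apply (Hi u); [right; exact Hu|exact Eu]. }
  destruct (omega_rank Sym le Hrefl Htrans Htot Hfin (SX 0) Hnomax) as [rep [r [Hr Hrep]]].
  assert (Hsame : forall s t, r s = r t -> seqv le s t) by (intros s t E; split; apply Hr; lia).
  exists (fun i => r (SX i)), (fun i => r (SY i)). split.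
  2: { intros s t. rewrite Hr. destruct s, t; reflexivity. }
  constructor.
  - intros i j Hij. destruct (HY i j Hij) as [_ N]. rewrite Hr in N. lia.
  - intros i. destruct (HXY i) as [_ N]. rewrite Hr in N. lia.
  - intros i j E. destruct (Hcls (SY j)) as [[j' [E' Hsingle]]|[Hxs _]].
    + specialize (Hsingle (SX i) (Hsame _ _ (eq_sym E))). discriminate.
    + destruct (Hxs (SY j) (conj (Hrefl _) (Hrefl _))) as [j' E']. discriminate.
  - intros i n. destruct (Hcls (SX i)) as [[i' [E' _]]|[_ Hclass]]; [discriminate|].
    destruct (Hclass n) as [j [Hj [H1 H2]]]. exists j. split; [exact Hj|].
    apply Hr in H1, H2. cbn. lia.
  - intros n. destruct (Hinf (map rep (seq 0 n))) as [i Hi]. exists i. cbn.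
    destruct (le_lt_dec n (r (SX i))) as [|Hlt]; [assumption|]. exfalso.
    apply (Hi (rep (r (SX i)))).
    + apply in_map, in_seq. lia.
    + apply Hsame. rewrite Hrep. reflexivity.
Qed.

(** * Density *)

Definition pick (P : nat -> Prop) : nat := epsilon (inhabits 0) P.

Lemma pick_spec (P : nat -> Prop) : (exists n, P n) -> P (pick P).
Proof. apply epsilon_spec. Qed.

Section Refinement.
Variables (a b : nat -> nat) (A : set2).
Hypothesis Hadm : admissible a b.
Hypothesis HA : inP A.

(* Values are chosen increasingly; for k = b j the section of the value of a j < k is infinite
   because a j is no value of b.  [place_hist k] holds the values below k. *)
Definition place_step (k : nat) (h : nat -> nat) : nat :=
  let j := pick (fun j => b j = k) in
  if Nat.eq_dec (b j) k then pick (fun y => h (pred k) < y /\ A (h (a j)) y = true)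
  else pick (fun x => h (pred k) < x /\ infinite_nat (section A x)).

Fixpoint place_hist (k : nat) : nat -> nat :=
  match k with
  | 0 => fun _ => 0
  | S k => fun i => if i <? k then place_hist k i else place_step k (place_hist k)
  end.

Definition place (k : nat) : nat := place_hist (S k) k.

Lemma place_eq k : place k = place_step k (place_hist k).
Proof. unfold place. cbn [place_hist]. rewrite Nat.ltb_irrefl. reflexivity. Qed.

Lemma place_hist_below n i : i < n -> place_hist n i = place i.
Proof.
  induction n as [|n IH]; intros Hi; [lia|]. cbn [place_hist].
  destruct (Nat.ltb_spec i n) as [Hin|Hin]; [apply IH, Hin|].
  replace i with n by lia. symmetry. apply place_eq.
Qed.

Lemma place_spec k :
  (forall j, b j = k -> A (place (a j)) (place k) = true) /\
  ((forall j, b j <> k) -> infinite_nat (section A (place k))) /\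
  place_hist k (pred k) < place k.
Proof.
  induction k as [k IH] using lt_wf_ind.
  rewrite place_eq. unfold place_step.
  destruct (Nat.eq_dec (b (pick (fun j => b j = k))) k) as [Ej|Nj].
  - set (j := pick (fun j => b j = k)) in *.
    assert (Hajk : a j < k) by (rewrite <- Ej; apply (adm_lt _ _ Hadm)).
    rewrite (place_hist_below k (a j) Hajk).
    destruct (pick_spec (fun y => place_hist k (pred k) < y /\ A (place (a j)) y = true))
      as [Hgt Hmem].
    { destruct (IH (a j) Hajk) as [_ [Hinf _]].
      destruct (Hinf (fun j' E => adm_neq _ _ Hadm j j' (eq_sym E)) (S (place_hist k (pred k))))
        as [y [Hy Hmem]].
      exists y. split; [lia|exact Hmem]. }
    split; [|split; [intros Hno; exfalso; exact (Hno j Ej)|exact Hgt]].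
    intros j' Ej'. rewrite <- Ej in Ej'.
    rewrite (increasing_inj b (adm_increasing _ _ Hadm) j' j Ej'). exact Hmem.
  - assert (Hno : forall j, b j <> k).
    { intros j Ej. apply Nj, (pick_spec (fun j => b j = k)). eauto. }
    destruct (pick_spec (fun x => place_hist k (pred k) < x /\ infinite_nat (section A x)))
      as [Hgt Hinf].
    { destruct HA as [Hinf _]. destruct (Hinf (S (place_hist k (pred k)))) as [x [Hx Hinfx]].
      exists x. split; [lia|exact Hinfx]. }
    split; [intros j Ej; exfalso; exact (Hno j Ej)|]. split; [intros _; exact Hinf|exact Hgt].
Qed.

Lemma admissible_embeds_into : exists g, increasing g /\ forall i, A (g (a i)) (g (b i)) = true.
Proof.
  exists place. split.
  - apply increasing_succ. intros k. destruct (place_spec (S k)) as [_ [_ Hgt]].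
    change (pred (S k)) with k in Hgt. rewrite (place_hist_below (S k) k) in Hgt by lia.
    exact Hgt.
  - intros i. apply (place_spec (b i)). reflexivity.
Qed.
End Refinement.

Lemma P_tau_dense tau A : omega_type tau -> inP A -> exists B, subset2 B A /\ P_tau tau B.
Proof.
  intros Htype HA. destruct (omega_type_admissible tau Htype) as [a [b [Hadm Htau]]].
  destruct (admissible_embeds_into a b A Hadm HA) as [g [Hg Hsub]].
  exists (graph (fun i => g (a i)) (fun i => g (b i))). split.
  - intros x y Hxy.
    apply (graph_listing _ _ (increasing_compose b g (adm_increasing _ _ Hadm) Hg)) in Hxy
      as [i [<- <-]].
    apply Hsub.
  - apply graph_P_tau; [apply admissible_compose; assumption|].
    intros s t. rewrite Htau. symmetry. apply ord_compose, Hg.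
Qed.

Lemma P_tau_nonempty tau : omega_type tau -> exists A, P_tau tau A.
Proof.
  intros Htype. destruct (omega_type_admissible tau Htype) as [a [b [Hadm Htau]]].
  exists (graph a b). apply graph_P_tau; assumption.
Qed.

Lemma inP_type_exists A : inP A -> exists tau, omega_type tau /\ P_tau tau A.
Proof.
  intros HA. destruct (inP_listing A HA) as [a [b Hlist]].
  exists (ord a b). split.
  - apply admissible_omega_type, (listing_admissible A a b Hlist HA).
  - split; [exact HA|]. exists a, b. destruct Hlist. unfold ord. tauto.
Qed.

Lemma interp_ext a b a' b' :
  (forall i, a i = a' i /\ b i = b' i) -> forall s, interp a b s = interp a' b' s.
Proof. intros H [i|i]; apply H. Qed.

Lemma P_tau_type_unique A tau tau' :
  P_tau tau A -> P_tau tau' A -> forall s t, tau s t <-> tau' s t.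
Proof.
  intros [HA [a [b [Hb [Hmem Htau]]]]] [_ [a' [b' [Hb' [Hmem' Htau']]]]] s t.
  pose proof (interp_ext _ _ _ _ (listing_unique A a b (conj Hb Hmem) HA a' b' (conj Hb' Hmem')))
    as E.
  rewrite Htau, Htau', !E. reflexivity.
Qed.

(** * Borelness *)

Lemma Borel_or (S T : set2 -> Prop) : Borel S -> Borel T -> Borel (fun A => S A \/ T A).
Proof.
  intros HS HT. apply (Borel_ext (fun A => exists n, (match n with 0 => S | _ => T end) A)).
  - apply Borel_union. intros [|n]; assumption.
  - intros A. split; [intros [[|n] H]; auto|intros [H|H]; [exists 0|exists 1]; exact H].
Qed.

Lemma Borel_and (S T : set2 -> Prop) : Borel S -> Borel T -> Borel (fun A => S A /\ T A).
Proof.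
  intros HS HT. apply (Borel_ext (fun A => ~ (~ S A \/ ~ T A))).
  - apply Borel_compl, Borel_or; apply Borel_compl; assumption.
  - intros A. tauto.
Qed.

Lemma Borel_impl (S T : set2 -> Prop) : Borel S -> Borel T -> Borel (fun A => S A -> T A).
Proof.
  intros HS HT. apply (Borel_ext (fun A => ~ S A \/ T A)).
  - apply Borel_or; [apply Borel_compl|]; assumption.
  - intros A. tauto.
Qed.

Lemma Borel_iff (S T : set2 -> Prop) : Borel S -> Borel T -> Borel (fun A => S A <-> T A).
Proof.
  intros HS HT. apply (Borel_ext (fun A => (S A -> T A) /\ (T A -> S A))).
  - apply Borel_and; apply Borel_impl; assumption.
  - intros A. tauto.
Qed.

Lemma Borel_all (F : nat -> set2 -> Prop) :
  (forall n, Borel (F n)) -> Borel (fun A => forall n, F n A).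
Proof.
  intros HF. apply (Borel_ext (fun A => ~ exists n, ~ F n A)).
  - apply Borel_compl, Borel_union. intros n. apply Borel_compl, HF.
  - intros A. split; [intros H n; apply NNPP; eauto|intros H [n Hn]; auto].
Qed.

Lemma Borel_all_sym (F : Sym -> set2 -> Prop) :
  (forall s, Borel (F s)) -> Borel (fun A => forall s, F s A).
Proof.
  intros HF. apply (Borel_ext (fun A => (forall n, F (SX n) A) /\ (forall n, F (SY n) A))).
  - apply Borel_and; apply Borel_all; intros; apply HF.
  - intros A. split; [intros [H1 H2] [n|n]; auto|intros H; split; intros; apply H].
Qed.

Lemma Borel_const (P : Prop) : Borel (fun _ => P).
Proof.
  assert (Htop : Borel (fun A => A 0 0 = true \/ A 0 0 <> true)).
  { apply Borel_or; [|apply Borel_compl]; apply Borel_basic. }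
  destruct (classic P) as [Hp|Hp].
  - apply (Borel_ext _ _ Htop). intros A. split; [auto|intros _; apply classic].
  - apply (Borel_ext _ _ (Borel_compl _ Htop)). intros A. split; [|tauto].
    intros H. exfalso. apply H, classic.
Qed.

Lemma Borel_coords (L : list (nat * nat)) (g : list bool -> Prop) :
  Borel (fun A => g (map (fun c => A (fst c) (snd c)) L)).
Proof.
  revert g. induction L as [|c L IH]; intros g; [cbn; apply Borel_const|].
  set (bits := fun A : set2 => map (fun c => A (fst c) (snd c)) L).
  apply (Borel_ext (fun A => (A (fst c) (snd c) = true /\ g (true :: bits A)) \/
                             (A (fst c) (snd c) <> true /\ g (false :: bits A)))).
  - apply Borel_or; apply Borel_and.
    + apply Borel_basic.
    + exact (IH (fun l => g (true :: l))).
    + apply Borel_compl, Borel_basic.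
    + exact (IH (fun l => g (false :: l))).
  - intros A. cbn. destruct (A (fst c) (snd c)); intuition congruence.
Qed.

Definition agree (N : nat) (A A' : set2) : Prop :=
  forall x y, x < N -> y < N -> A x y = A' x y.

Lemma Borel_local (N : nat) (S : set2 -> Prop) :
  (forall A A', agree N A A' -> S A -> S A') -> Borel S.
Proof.
  intros HS. set (L := list_prod (seq 0 N) (seq 0 N)).
  set (bits := fun A : set2 => map (fun c => A (fst c) (snd c)) L).
  apply (Borel_ext (fun A => exists A', bits A' = bits A /\ S A')).
  - exact (Borel_coords L (fun l => exists A', bits A' = l /\ S A')).
  - intros A. split; [|intros HA; exists A; auto].
    intros [A' [E HA']]. apply (HS A' A); [|exact HA'].
    intros x y Hx Hy.
    assert (Hin : In (x, y) L) by (apply in_prod_iff; split; apply in_seq; lia).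
    exact (proj1 map_ext_in_iff E (x, y) Hin).
Qed.

Ltac borel := repeat first
  [ apply Borel_const | apply Borel_basic | apply Borel_and | apply Borel_or
  | apply Borel_iff | apply Borel_impl | apply Borel_compl | apply Borel_union
  | apply Borel_all | apply Borel_all_sym | intro ].

Lemma Borel_inP : Borel inP.
Proof. unfold inP, infinite_nat, section. borel. Qed.

Definition count (f : nat -> bool) (p : nat) : nat := length (filter f (seq 0 p)).

Lemma count_succ f p : count f (S p) = count f p + (if f p then 1 else 0).
Proof.
  unfold count. rewrite seq_S, filter_app, length_app. cbn. destruct (f p); reflexivity.
Qed.

Lemma count_ext f f' p : (forall z, z < p -> f z = f' z) -> count f p = count f' p.
Proof.
  intros H. unfold count. f_equal. apply filter_ext_in.
  intros z Hz. apply in_seq in Hz. apply H. lia.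
Qed.

Lemma lt_iff_eq m n : (forall i, i < m <-> i < n) -> m = n.
Proof. intros H. specialize (H m) as Hm. specialize (H n). lia. Qed.

Lemma count_enum f b : increasing b -> (forall y, f y = true <-> exists i, b i = y) ->
  forall j, count f (b j) = j.
Proof.
  intros Hb Hf.
  assert (Hcount : forall p i, i < count f p <-> b i < p).
  { induction p as [|p IH]; intros i; [cbn; lia|]. rewrite count_succ.
    destruct (f p) eqn:Ep.
    - destruct (proj1 (Hf p) Ep) as [m <-].
      assert (Em : count f (b m) = m).
      { apply lt_iff_eq. intros i'. rewrite IH. apply increasing_lt_iff, Hb. }
      rewrite Em, Nat.add_1_r, Nat.lt_succ_r, Nat.lt_succ_r.
      symmetry. apply increasing_le_iff, Hb.
    - rewrite Nat.add_0_r, IH.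
      assert (b i <> p) by (intros <-; rewrite (proj2 (Hf (b i))) in Ep; [discriminate|eauto]).
      lia. }
  intros j. apply lt_iff_eq. intros i. rewrite Hcount. apply increasing_lt_iff, Hb.
Qed.

(* for a member of P, [y] is a second coordinate iff some [x < y] pairs with it *)
Definition second (A : set2) (y : nat) : bool := existsb (fun x => A x y) (seq 0 y).

Definition nth_second (A : set2) (j p : nat) : Prop :=
  second A p = true /\ count (second A) p = j.

Definition position (A : set2) (s : Sym) (v : nat) : Prop :=
  match s with
  | SX j => exists p, nth_second A j p /\ A v p = true
  | SY j => nth_second A j v
  end.

Definition realizes_by_count (tau : Sym -> Sym -> Prop) (A : set2) : Prop :=
  forall s t, tau s t <-> exists p q, p <= q /\ position A s p /\ position A t q.

Section Positions.
Variables (A : set2) (a b : nat -> nat).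
Hypothesis HA : inP A.
Hypothesis Hlist : listing A a b.

Lemma second_listing y : second A y = true <-> exists i, b i = y.
Proof.
  destruct Hlist as [_ Hmem]. unfold second. rewrite existsb_exists. split.
  - intros [x [_ Hxy]]. apply Hmem in Hxy as [i [_ E]]. eauto.
  - intros [i <-]. exists (a i). split; [|apply listing_mem, Hlist].
    apply in_seq. destruct HA as [_ [_ [_ [Hlt _]]]].
    specialize (Hlt _ _ (listing_mem A a b Hlist i)). lia.
Qed.

Lemma nth_second_listing j p : nth_second A j p <-> b j = p.
Proof.
  pose proof (count_enum (second A) b (proj1 Hlist) second_listing) as Hcount.
  unfold nth_second. split.
  - intros [Hp Hj]. apply second_listing in Hp as [i <-]. rewrite Hcount in Hj. congruence.
  - intros <-. split; [apply second_listing; eauto|apply Hcount].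
Qed.

Lemma position_listing s v : position A s v <-> interp a b s = v.
Proof.
  destruct s as [j|j]; cbn; [|apply nth_second_listing].
  split.
  - intros [p [Hp Hvp]]. apply nth_second_listing in Hp as <-.
    destruct HA as [_ [_ [Hdisj _]]]. apply (Hdisj _ _ (b j)); [apply listing_mem, Hlist|exact Hvp].
  - intros <-. exists (b j).
    split; [apply nth_second_listing; reflexivity|apply listing_mem, Hlist].
Qed.

Lemma ord_iff_by_count tau : (forall s t, tau s t <-> ord a b s t) <-> realizes_by_count tau A.
Proof.
  assert (Hord : forall s t,
             ord a b s t <-> exists p q, p <= q /\ position A s p /\ position A t q).
  { intros s t. unfold ord. split.
    - intros H. exists (interp a b s), (interp a b t). rewrite !position_listing. auto.
    - intros [p [q [H [Hp Hq]]]]. rewrite position_listing in Hp, Hq. congruence. }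
  unfold realizes_by_count. split; intros H s t; rewrite H; [apply Hord|symmetry; apply Hord].
Qed.
End Positions.

Lemma existsb_ext_in {T} (f g : T -> bool) l :
  (forall x, In x l -> f x = g x) -> existsb f l = existsb g l.
Proof.
  induction l as [|x l IH]; intros H; [reflexivity|]. cbn.
  rewrite H, IH; [reflexivity| |left; reflexivity]. intros y Hy. apply H. right. exact Hy.
Qed.

Lemma Borel_nth_second j p : Borel (fun A => nth_second A j p).
Proof.
  apply (Borel_local (S p)). intros A A' Hagree.
  assert (Hsecond : forall q, q <= p -> second A q = second A' q).
  { intros q Hq. apply existsb_ext_in. intros x Hx. apply in_seq in Hx. apply Hagree; lia. }
  unfold nth_second. rewrite (count_ext (second A) (second A') p), Hsecond;
    [exact (fun H => H)|lia|intros; apply Hsecond; lia].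
Qed.

Lemma Borel_position s v : Borel (fun A => position A s v).
Proof.
  destruct s as [j|j]; [|apply Borel_nth_second].
  apply Borel_union. intros p. apply Borel_and; [apply Borel_nth_second|apply Borel_basic].
Qed.

Lemma Borel_P_tau tau : Borel (P_tau tau).
Proof.
  apply (Borel_ext (fun A => inP A /\ realizes_by_count tau A)).
  - apply Borel_and; [exact Borel_inP|]. unfold realizes_by_count.
    apply Borel_all_sym; intros s. apply Borel_all_sym; intros t.
    apply Borel_iff; [apply Borel_const|]. apply Borel_union; intros p. apply Borel_union; intros q.
    apply Borel_and; [apply Borel_const|]. apply Borel_and; apply Borel_position.
  - intros A. split; intros [HA Htau]; split; try exact HA.
    + destruct (inP_listing A HA) as [a [b Hlist]]. exists a, b.
      destruct Hlist as [Hb Hmem]. split; [exact Hb|split; [exact Hmem|]].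
      apply (ord_iff_by_count A a b HA (conj Hb Hmem)), Htau.
    + destruct Htau as [a [b [Hb [Hmem Htau]]]].
      apply (ord_iff_by_count A a b HA (conj Hb Hmem)), Htau.
Qed.

(** * Continuum many omega-types *)

(* Each x-class k sits at 4k; y_k sits at 4k+3 or 4k+5, i.e. before or after the class of
   index k+1, according to the bit u k. *)
Definition cantor_a (i : nat) : nat := 4 * fst (Cantor.of_nat i).
Definition coded_b (u : nat -> bool) (i : nat) : nat := 4 * i + 3 + (if u i then 2 else 0).

Lemma fst_of_nat_le i : fst (Cantor.of_nat i) <= i.
Proof.
  pose proof (Cantor.cancel_to_of i) as E. destruct (Cantor.of_nat i) as [x y]. cbn.
  pose proof (Cantor.to_nat_non_decreasing x y). lia.
Qed.

Lemma admissible_coded u : admissible cantor_a (coded_b u).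
Proof.
  unfold cantor_a, coded_b. constructor.
  - intros i j Hij. destruct (u i), (u j); lia.
  - intros i. pose proof (fst_of_nat_le i). destruct (u i); lia.
  - intros i j. destruct (u j); lia.
  - intros i n. exists (Cantor.to_nat (fst (Cantor.of_nat i), n)). rewrite Cantor.cancel_of_to.
    split; [|reflexivity]. pose proof (Cantor.to_nat_non_decreasing (fst (Cantor.of_nat i)) n). lia.
  - intros n. exists (Cantor.to_nat (n, 0)). rewrite Cantor.cancel_of_to. cbn. lia.
Qed.

Lemma coded_decode u k :
  ord cantor_a (coded_b u) (SX (Cantor.to_nat (S k, 0))) (SY k) <-> u k = true.
Proof.
  unfold ord, cantor_a, coded_b. cbn [interp]. rewrite Cantor.cancel_of_to. cbn [fst].
  destruct (u k); split; intros; (lia || discriminate).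
Qed.

Lemma omega_types_continuum : exists f : (nat -> bool) -> (Sym -> Sym -> Prop),
  (forall u, omega_type (f u)) /\ (forall u v, (forall s t, f u s t <-> f v s t) -> u = v).
Proof.
  exists (fun u => ord cantor_a (coded_b u)). split.
  - intros u. apply admissible_omega_type, admissible_coded.
  - intros u v H. apply functional_extensionality. intros k.
    specialize (H (SX (Cantor.to_nat (S k, 0))) (SY k)). rewrite !coded_decode in H.
    destruct (u k), (v k); intuition.
Qed.

Theorem mainTheorem11 :
  (* each P_tau is Borel and dense in P *)
  (forall tau : Sym -> Sym -> Prop, omega_type tau ->
     Borel (P_tau tau) /\
     (forall A : set2, inP A -> exists B : set2, subset2 B A /\ P_tau tau B)) /\
  (* the P_tau partition P: every A in P realizes exactly one omega-type *)
  (forall A : set2, inP A -> exists tau, omega_type tau /\ P_tau tau A) /\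
  (forall (A : set2) tau tau', P_tau tau A -> P_tau tau' A ->
     forall s t, tau s t <-> tau' s t) /\
  (* each piece is nonempty *)
  (forall tau, omega_type tau -> exists A : set2, P_tau tau A) /\
  (* there are continuum many omega-types *)
  (exists f : (nat -> bool) -> (Sym -> Sym -> Prop),
     (forall u, omega_type (f u)) /\
     (forall u v, (forall s t, f u s t <-> f v s t) -> u = v)).
Proof.
  split; [|split; [|split; [|split]]].
  - intros tau Htype. split; [apply Borel_P_tau|]. intros A. apply P_tau_dense, Htype.
  - exact inP_type_exists.
  - exact P_tau_type_unique.
  - exact P_tau_nonempty.
  - exact omega_types_continuum.
Qed.
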